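(* Let $(X,r)$ be a finite solution of the YBE. Suppose that for some prime divisor $p$ of $|\mathcal G(X,r)|$, the group $\mathcal G(X,r)$ has an abelian normal Sylow $p$-subgroup. Then $(X,r)$ is retractable, i.e. there exist distinct $x,y\in X$ with $\sigma_x=\sigma_y$.
   Context: A solution of the Yang–Baxter equation (YBE) is a pair $(X,r)$, where $X$ is a non-empty set and $r\colon X\times X\to X\times X$, written $r(x,y)=(\sigma_x(y),\gamma_y(x))$, satisfies: $r^2=\mathrm{id}$; all maps $\sigma_x,\gamma_y\colon X\to X$ are bijections; and $r_{12}r_{23}r_{12}=r_{23}r_{12}r_{23}$ as maps $X^3\to X^3$, where $r_{12}=r\times\mathrm{id}_X$ and $r_{23}=\mathrm{id}_X\times r$. The permutation group of $(X,r)$ is $\mathcal G(X,r)=\langle \sigma_x : x\in X\rangle\le \mathrm{Sym}_X$ (a group under composition). *)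

From mathcomp Require Import all_boot all_fingroup all_solvable.
Set Implicit Arguments. Unset Strict Implicit. Unset Printing Implicit Defensive.

Definition sigma (X : finType) (r : X * X -> X * X) (x : X) : X -> X :=
  fun y => (r (x, y)).1.
Definition gamma (X : finType) (r : X * X -> X * X) (y : X) : X -> X :=
  fun x => (r (x, y)).2.

Definition r12 (X : Type) (r : X * X -> X * X) (t : X * X * X) : X * X * X :=
  let: (a, b, c) := t in let: (a', b') := r (a, b) in (a', b', c).
Definition r23 (X : Type) (r : X * X -> X * X) (t : X * X * X) : X * X * X :=
  let: (a, b, c) := t in let: (b', c') := r (b, c) in (a, b', c').

Definition is_YB_solution (X : finType) (r : X * X -> X * X) : Prop :=
  [/\ 0 < #|X|,
      (forall t, r (r t) = t),
      (forall x, bijective (sigma r x)),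
      (forall y, bijective (gamma r y)) &
      (forall t, r12 r (r23 r (r12 r t)) = r23 r (r12 r (r23 r t)))].

Definition sigma_perms (X : finType) (r : X * X -> X * X) : {set {perm X}} :=
  [set s : {perm X} | [exists x, [forall y, s y == sigma r x y]]].

Definition perm_group_YB (X : finType) (r : X * X -> X * X) : {group {perm X}} :=
  <<sigma_perms r>>%G.

Definition retractable (X : finType) (r : X * X -> X * X) : Prop :=
  exists x y : X, x <> y /\ sigma r x = sigma r y.

From Pilot Require Import Defs.
From mathcomp Require Import all_boot all_fingroup all_solvable.
From Stdlib Require Import FunctionalExtensionality.
Set Implicit Arguments. Unset Strict Implicit. Unset Printing Implicit Defensive.
Local Open Scope group_scope.

(* Only the cycle-set identity
     sigma_u o sigma_(sigma_u^-1 v) = sigma_v o sigma_(sigma_v^-1 u)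
   of an involutive solution is used. It makes the evaluation of a word in X to a
   permutation independent of the order of the letters, so concatenation of words
   induces a commutative addition on G = <sigma_x>, and (G, +, o) is a brace:
   g o h = g + lambda_g(h) with lambda_g additive and lambda_g(sigma_x) = sigma_(g x).
   The p-part of the abelian group (G, +) is closed under o and has order |G|_p, so it
   is the normal Sylow subgroup P; comparing p'-parts of the two sides of
   c o a' = a o c (a, a' in P) shows that lambda_P fixes the p'-part of (G, +) pointwise.
   The p-group P acts on itself through lambda and fixes 1, hence fixes some b <> 1;
   P being abelian, b o a = a o b forces lambda_b to be trivial on P, so lambda_b = id.
   Then sigma_(b x) = lambda_b(sigma_x) = sigma_x for any x moved by b. *)

Section CycleSetBrace.
Variables (X : finType) (sp : X -> {perm X}).
Hypothesis sp_cycle :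
  forall u v, sp ((sp u)^-1 v) * sp u = sp ((sp v)^-1 u) * sp v.

Local Notation G := <<[set sp x | x : X]>>.

(* The image in G of the sum of the letters of s in the (free abelian) additive group
   of the structure group. *)
Definition word_perm (s : seq X) : {perm X} :=
  foldl (fun (g : {perm X}) y => sp (g^-1 y) * g) 1 s.

Lemma word_perm_rcons s y : word_perm (rcons s y) = sp ((word_perm s)^-1 y) * word_perm s.
Proof. by rewrite /word_perm foldl_rcons. Qed.

Lemma word_perm1 x : word_perm [:: x] = sp x.
Proof. by rewrite /word_perm /= invg1 perm1 mulg1. Qed.

Lemma word_perm_rcons2C s y z :
  word_perm (rcons (rcons s y) z) = word_perm (rcons (rcons s z) y).
Proof. by rewrite !word_perm_rcons !invMg !permM !mulgA sp_cycle. Qed.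

Lemma word_perm_rconsl s t y :
  word_perm s = word_perm t -> word_perm (rcons s y) = word_perm (rcons t y).
Proof. by rewrite !word_perm_rcons => ->. Qed.

Lemma word_perm_move s t y : word_perm (s ++ y :: t) = word_perm (rcons (s ++ t) y).
Proof.
elim/last_ind: t => [|t z IH]; first by rewrite cats1 cats0.
rewrite -rcons_cons -!rcons_cat (word_perm_rconsl z IH) word_perm_rcons2C.
by rewrite rcons_cat.
Qed.

Lemma perm_word_perm s t : perm_eq s t -> word_perm s = word_perm t.
Proof.
elim/last_ind: s t => [|s y IH] t; first by move=> /perm_size; case: t.
move=> st; have /splitPr split_t : y \in t by rewrite -(perm_mem st) mem_rcons mem_head.
case: split_t st => t1 t2 st; rewrite word_perm_move; apply/word_perm_rconsl/IH.
rewrite -(perm_cons y) -(perm_rcons y) (perm_trans st) //.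
by rewrite -cat1s perm_catCA.
Qed.

Lemma word_perm_cat s t :
  word_perm (s ++ t) = word_perm (map (word_perm s)^-1 t) * word_perm s.
Proof.
elim/last_ind: t => [|t y IH]; first by rewrite cats0 mul1g.
by rewrite -rcons_cat map_rcons !word_perm_rcons IH invMg permM mulgA.
Qed.

Lemma word_perm_catl s s' t :
  word_perm s = word_perm s' -> word_perm (s ++ t) = word_perm (s' ++ t).
Proof. by rewrite !word_perm_cat => ->. Qed.

Lemma word_perm_catr s t t' :
  word_perm t = word_perm t' -> word_perm (s ++ t) = word_perm (s ++ t').
Proof.
move=> tt'; rewrite (perm_word_perm (permEl (perm_catC s t))).
by rewrite (perm_word_perm (permEl (perm_catC s t'))); apply: word_perm_catl.
Qed.

Lemma sp_in x : sp x \in G.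
Proof. by rewrite mem_gen ?imset_f. Qed.

Lemma word_perm_in s : word_perm s \in G.
Proof.
elim/last_ind: s => [|s y IH]; first exact: group1.
by rewrite word_perm_rcons groupM ?sp_in.
Qed.

Lemma word_perm_onto g : g \in G -> exists s, word_perm s = g.
Proof.
case/gen_prodgP => n [c c_sp ->] {g}.
elim: n c c_sp => [|n IH] c c_sp; first by exists [::]; rewrite big_ord0.
rewrite big_ord_recr /=.
have [s <-] := IH (fun i => c (widen_ord (leqnSn n) i)) (fun i => c_sp _).
have /imsetP[x _ ->] := c_sp ord_max.
exists (x :: map (sp x) s).
by rewrite -cat1s word_perm_cat word_perm1 (mapK (permK (sp x))).
Qed.

Lemma word_of_subproof g : exists s, (g \in G) ==> (word_perm s == g).
Proof.
case Gg: (g \in G); last by exists [::].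
by have [s sg] := word_perm_onto Gg; exists s; rewrite sg eqxx.
Qed.

(* Meaningless for g outside G. *)
Definition word_of g := xchoose (word_of_subproof g).

Lemma word_ofK g : g \in G -> word_perm (word_of g) = g.
Proof. by move=> Gg; apply/eqP; have /implyP := xchooseP (word_of_subproof g); apply. Qed.

Definition badd (a b : {perm X}) : {perm X} := word_perm (word_of a ++ word_of b).

Definition blam (g a : {perm X}) : {perm X} := word_perm (map g (word_of a)).

Lemma badd_word s t : badd (word_perm s) (word_perm t) = word_perm (s ++ t).
Proof.
rewrite /badd (word_perm_catl _ (word_ofK (word_perm_in s))).
exact: word_perm_catr (word_ofK (word_perm_in t)).
Qed.

Lemma badd_in a b : badd a b \in G. Proof. exact: word_perm_in. Qed.

Lemma blam_in g a : blam g a \in G. Proof. exact: word_perm_in. Qed.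

Lemma baddC a b : a \in G -> b \in G -> badd a b = badd b a.
Proof.
move=> /word_perm_onto[s <-] /word_perm_onto[t <-]; rewrite !badd_word.
exact/perm_word_perm/permEl/perm_catC.
Qed.

Lemma baddA a b c : a \in G -> b \in G -> c \in G ->
  badd a (badd b c) = badd (badd a b) c.
Proof.
move=> /word_perm_onto[s <-] /word_perm_onto[t <-] /word_perm_onto[u <-].
by rewrite !badd_word catA.
Qed.

Lemma badd1g a : a \in G -> badd 1 a = a.
Proof. by move=> /word_perm_onto[s <-]; rewrite -[1]/(word_perm [::]) badd_word. Qed.

Lemma badd_word_map g t : g \in G -> badd g (word_perm (map g t)) = word_perm t * g.
Proof.
by move=> /word_perm_onto[s <-]; rewrite badd_word word_perm_cat (mapK (permK _)).
Qed.

Lemma mul_badd k g : k \in G -> g \in G -> k * g = badd g (blam g k).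
Proof. by move=> Gk Gg; rewrite badd_word_map // word_ofK. Qed.

Lemma badd_cancel g a b : g \in G -> a \in G -> b \in G -> badd g a = badd g b -> a = b.
Proof.
move=> Gg Ga Gb gab; pose n := blam g g^-1.
have ng : badd n g = 1 by rewrite baddC ?blam_in // -mul_badd ?groupV ?mulVg.
by rewrite -(badd1g Ga) -(badd1g Gb) -ng -!baddA ?blam_in // gab.
Qed.

Lemma blam_word g t : g \in G -> blam g (word_perm t) = word_perm (map g t).
Proof.
move=> Gg; apply: (badd_cancel Gg); rewrite ?blam_in ?word_perm_in //.
by rewrite -mul_badd ?word_perm_in // badd_word_map.
Qed.

Lemma blam_sp g x : g \in G -> blam g (sp x) = sp (g x).
Proof. by move=> Gg; rewrite -!word_perm1 blam_word. Qed.

Lemma blamg1 g : g \in G -> blam g 1 = 1.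
Proof. by move=> Gg; rewrite -[1]/(word_perm [::]) blam_word. Qed.

Lemma blam_badd g a b : g \in G -> a \in G -> b \in G ->
  blam g (badd a b) = badd (blam g a) (blam g b).
Proof.
move=> Gg /word_perm_onto[s <-] /word_perm_onto[t <-].
by rewrite badd_word !blam_word // map_cat badd_word.
Qed.

Lemma blamM g k a : g \in G -> k \in G -> a \in G -> blam (g * k) a = blam k (blam g a).
Proof.
move=> Gg Gk /word_perm_onto[s <-]; rewrite !blam_word ?groupM // -map_comp.
by congr word_perm; apply: eq_map => x; rewrite permM.
Qed.

Lemma blam1g a : a \in G -> blam 1 a = a.
Proof.
move=> /word_perm_onto[s <-]; rewrite blam_word //; congr word_perm.
by rewrite -[RHS]map_id; apply: eq_map => x; rewrite perm1.
Qed.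

Lemma blamK g a : g \in G -> a \in G -> blam g^-1 (blam g a) = a.
Proof. by move=> Gg Ga; rewrite -blamM ?groupV // mulgV blam1g. Qed.

Lemma blamVK g a : g \in G -> a \in G -> blam g (blam g^-1 a) = a.
Proof. by move=> Gg Ga; rewrite -{1}(invgK g) blamK ?groupV. Qed.

(* Turns bijections [f g] of G into permutations of {perm X}, fixing the complement of G,
   so that finite group theory applies to them. *)
Definition on_G (f : {perm X} -> {perm X} -> {perm X}) g h :=
  if (g \in G) && (h \in G) then f g h else h.

Lemma on_G_inj f g : (forall g h, f g h \in G) ->
  (forall g, g \in G -> {in G &, injective (f g)}) -> injective (on_G f g).
Proof.
move=> fG f_inj h h'; rewrite /on_G; case Gg: (g \in G) => //=.
case Gh: (h \in G); case Gh': (h' \in G) => //; first exact: f_inj.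
- by move=> fh; move: (fG g h); rewrite fh Gh'.
- by move=> fh; move: (fG g h'); rewrite -fh Gh.
Qed.

Lemma badd_inj g : g \in G -> {in G &, injective (badd g)}.
Proof. by move=> Gg a b; apply: badd_cancel. Qed.

Lemma blam_inj g : g \in G -> {in G &, injective (blam g)}.
Proof. by move=> Gg a b Ga Gb gab; rewrite -(blamK Gg Ga) gab blamK. Qed.

Definition badd_perm b : {perm {perm X}} := perm (@on_G_inj badd b badd_in badd_inj).

Definition blam_perm g : {perm {perm X}} := perm (@on_G_inj blam g blam_in blam_inj).

Lemma badd_permE b h : b \in G -> h \in G -> badd_perm b h = badd b h.
Proof. by move=> Gb Gh; rewrite permE /on_G Gb Gh. Qed.

Lemma badd_permN b h : h \notin G -> badd_perm b h = h.
Proof. by move=> Gh; rewrite permE /on_G (negbTE Gh) andbF. Qed.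

Lemma blam_permE g h : g \in G -> h \in G -> blam_perm g h = blam g h.
Proof. by move=> Gg Gh; rewrite permE /on_G Gg Gh. Qed.

Lemma blam_permN g h : h \notin G -> blam_perm g h = h.
Proof. by move=> Gh; rewrite permE /on_G (negbTE Gh) andbF. Qed.

Lemma badd_permM a b : a \in G -> b \in G ->
  badd_perm a * badd_perm b = badd_perm (badd a b).
Proof.
move=> Ga Gb; apply/permP => h; rewrite permM.
case Gh: (h \in G); last by rewrite !badd_permN ?Gh.
by rewrite !badd_permE ?badd_in // baddA // (baddC Ga Gb).
Qed.

Lemma badd_perm1 : badd_perm 1 = 1.
Proof.
apply/permP => h; rewrite perm1.
case Gh: (h \in G); last by rewrite badd_permN ?Gh.
by rewrite badd_permE ?badd1g.
Qed.

Lemma badd_perm_inj : {in G &, injective badd_perm}.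
Proof.
move=> a b Ga Gb /(congr1 (fun t : {perm {perm X}} => t 1)).
by rewrite !badd_permE // !(baddC _ (group1 _)) ?badd1g.
Qed.

Lemma commute_badd_perm a b : a \in G -> b \in G -> commute (badd_perm a) (badd_perm b).
Proof. by move=> Ga Gb; rewrite /commute !badd_permM // baddC. Qed.

Lemma blam_permV g h : g \in G -> h \in G -> (blam_perm g)^-1 h = blam g^-1 h.
Proof.
move=> Gg Gh; apply: (@perm_inj _ (blam_perm g)).
by rewrite permKV blam_permE ?blam_in ?blamVK.
Qed.

Lemma badd_perm_blam g c : g \in G -> c \in G ->
  badd_perm (blam g c) = badd_perm c ^ blam_perm g.
Proof.
move=> Gg Gc; apply/permP => h; rewrite conjgE !permM.
case Gh: (h \in G).
  rewrite blam_permV // [badd_perm c _]badd_permE ?blam_in // blam_permE ?badd_in //.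
  by rewrite badd_permE ?blam_in // blam_badd ?blam_in // blamVK.
have fix_h : (blam_perm g)^-1 h = h.
  by apply: (@perm_inj _ (blam_perm g)); rewrite permKV blam_permN ?Gh.
by rewrite fix_h !badd_permN ?blam_permN ?Gh.
Qed.

Lemma blam_is_action : is_action G (fun h g => blam_perm g h).
Proof.
split=> [g h h' /perm_inj // | h g k Gg Gk /=].
case Gh: (h \in G); last by rewrite !blam_permN ?Gh.
by rewrite !blam_permE ?groupM ?blam_in // blamM.
Qed.

Definition blam_action := Action blam_is_action.

Lemma badd_perm_group_set : group_set (badd_perm @: G).
Proof.
apply/group_setP; split; first by rewrite -badd_perm1 imset_f.
move=> _ _ /imsetP[a Ga ->] /imsetP[b Gb ->].
by rewrite badd_permM ?imset_f ?badd_in.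
Qed.

Definition additive_group := Group badd_perm_group_set.

Lemma additive_group_abelian : abelian additive_group.
Proof.
by apply/centsP => _ /imsetP[a Ga ->] _ /imsetP[b Gb ->]; apply: commute_badd_perm.
Qed.

Lemma card_additive_group : #|additive_group| = #|G|.
Proof. exact: card_in_imset badd_perm_inj. Qed.

Definition bpart pi := [set b in G | pi.-elt (badd_perm b)].

Lemma bpart_sub pi : {subset bpart pi <= G}.
Proof. by move=> b; rewrite inE => /andP[]. Qed.

Lemma bpart_badd pi a b : a \in bpart pi -> b \in bpart pi -> badd a b \in bpart pi.
Proof.
rewrite !inE => /andP[Ga pa] /andP[Gb pb].
rewrite badd_in -badd_permM //; apply: p_eltM => //.
exact: commute_badd_perm.
Qed.

Lemma bpart_blam pi g b : g \in G -> b \in bpart pi -> blam g b \in bpart pi.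
Proof.
by move=> Gg; rewrite !inE => /andP[Gb pb]; rewrite blam_in badd_perm_blam // p_eltJ.
Qed.

Lemma bpart_group_set pi : group_set (bpart pi).
Proof.
apply/group_setP; split; first by rewrite inE group1 badd_perm1 p_elt1.
move=> a b pa pb; have Ga := bpart_sub pa; have Gb := bpart_sub pb.
by rewrite mul_badd // bpart_badd ?bpart_blam.
Qed.

Lemma badd_perm_bpart pi : badd_perm @: bpart pi = 'O_pi(additive_group).
Proof.
have nil_add := abelian_nil additive_group_abelian.
have O_pi := mem_normal_Hall (nilpotent_pcore_Hall pi nil_add) (pcore_normal _ _).
apply/setP => t; apply/imsetP/idP => [[b] | Ot].
  by rewrite inE => /andP[Gb pb] ->; rewrite O_pi ?imset_f.
have At := subsetP (pcore_sub pi additive_group) t Ot.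
have /imsetP[b Gb tb] := At.
by exists b; rewrite // inE Gb -tb -O_pi.
Qed.

Lemma card_bpart pi : #|bpart pi| = (#|G|`_pi)%N.
Proof.
have nil_add := abelian_nil additive_group_abelian.
rewrite -card_additive_group -(card_Hall (nilpotent_pcore_Hall pi nil_add)).
rewrite /= -badd_perm_bpart card_in_imset //.
by apply: sub_in2 badd_perm_inj => b; apply: bpart_sub.
Qed.

Lemma constt_badd_perm pi a b : a \in bpart pi -> b \in bpart pi^' ->
  (badd_perm (badd a b)).`_pi^' = badd_perm b.
Proof.
rewrite !inE => /andP[Ga pa] /andP[Gb p'b].
rewrite -badd_permM // consttM; last exact: commute_badd_perm.
rewrite [X in _ * X]constt_p_elt //.
have /constt1P-> : pi^'^'.-elt (badd_perm a) by rewrite p_eltNK.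
by rewrite mul1g.
Qed.

Lemma bpart_decomp pi c : c \in G ->
  exists2 a, a \in bpart pi & exists2 b, b \in bpart pi^' & c = badd a b.
Proof.
move=> Gc; set t := badd_perm c.
have part_in rho : exists2 b, b \in bpart rho & badd_perm b = t.`_rho.
  have At : <[t]> \subset additive_group by rewrite cycle_subG imset_f.
  have /imsetP[b Gb tb] := subsetP At _ (cycle_constt rho t).
  by exists b; rewrite // inE Gb -tb p_elt_constt.
have [a pa ta] := part_in pi; have [b p'b tb] := part_in pi^'.
exists a => //; exists b => //; apply: badd_perm_inj; rewrite ?badd_in //.
have Ga := bpart_sub pa; have Gb := bpart_sub p'b.
by rewrite -badd_permM // ta tb consttC.
Qed.

Lemma sp_collapse_of_blam_id b : b \in G -> b != 1 -> {in G, forall c, blam b c = c} ->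
  exists x y, x <> y /\ sp x = sp y.
Proof.
move=> Gb b_neq1 b_id; have [x bx] : exists x, b x != x.
  apply/existsP; apply: contraR b_neq1 => /existsPn b_fix.
  by apply/eqP/permP => x; rewrite perm1; apply/eqP/negPn/b_fix.
by exists (b x), x; split; [apply/eqP | rewrite -blam_sp // b_id ?sp_in].
Qed.

Section NormalSylow.
Variables (p : nat) (P : {group {perm X}}).
Hypotheses (p_pr : prime p) (sylP : p.-Sylow(G) P) (nPG : P <| G).

Let sPG : {subset P <= G} := subsetP (normal_sub nPG).

Lemma bpart_Sylow : bpart p = P.
Proof.
have sBG : Group (bpart_group_set p) \subset G by apply/subsetP/bpart_sub.
apply/eqP; rewrite eqEcard (card_Hall sylP) card_bpart leqnn andbT.
by rewrite (sub_normal_Hall sylP nPG sBG) /pgroup card_bpart part_pnat.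
Qed.

(* Compare the additive p'-parts of both sides of a^(c^-1) * c = c * a. *)
Lemma blam_Sylow_p' a c : a \in P -> c \in bpart p^' -> blam a c = c.
Proof.
move=> Pa p'c; have Ga := sPG Pa; have Gc := bpart_sub p'c.
have Pac : a ^ c^-1 \in P by rewrite memJ_norm // groupV (subsetP (normal_norm nPG)).
have Gac := sPG Pac.
have : a ^ c^-1 * c = c * a by rewrite conjgE invgK mulgA mulgKV.
rewrite !mul_badd // (baddC Gc) ?blam_in //.
move/(congr1 (fun b => (badd_perm b).`_p^')).
rewrite !constt_badd_perm ?bpart_blam ?bpart_Sylow //.
by move/badd_perm_inj => /(_ Gc (blam_in a c)).
Qed.

(* The number of points of P fixed by the action of the p-group P is divisible by p,
   and 1 is one of them. *)
Lemma exists_blam_fixed_Sylow : p %| #|G| ->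
  exists2 b, b \in P & b != 1 /\ forall a, a \in P -> blam a b = b.
Proof.
move=> p_dvd_G; have acts_P : [acts P, on P | blam_action].
  apply/subsetP => g Pg; rewrite !inE sPG //=; apply/subsetP => h Ph.
  by rewrite inE /= blam_permE ?sPG // -bpart_Sylow bpart_blam ?bpart_Sylow ?sPG.
set F := 'Fix_(P | blam_action)(P).
have F1 : 1 \in F.
  by rewrite inE group1; apply/afixP => a Pa; rewrite /= blam_permE ?blamg1 ?sPG.
have p_dvd_P : p %| #|P|.
  rewrite (card_Hall sylP) p_part dvdn_exp ?dvdnn // logn_gt0 mem_primes.
  by rewrite p_pr cardG_gt0.
have p_dvd_F : p %| #|F| by rewrite /dvdn -(pgroup_fix_mod (pHall_pgroup sylP) acts_P).
have : 0 < #|F :\ 1|.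
  rewrite -(ltn_add2l (1 \in F)) -cardsD1 F1 (leq_trans (prime_gt1 p_pr)) //.
  by rewrite dvdn_leq // (cardsD1 1) F1.
case/card_gt0P => b; rewrite !inE => /and3P[b_neq1 Pb /subsetP b_fix].
exists b => //; split=> // a Pa.
by have := b_fix a Pa; rewrite inE /= blam_permE ?sPG // => /eqP.
Qed.

Hypothesis abP : abelian P.

Lemma blam_fixed_on_Sylow b : b \in P -> (forall a, a \in P -> blam a b = b) ->
  forall a, a \in P -> blam b a = a.
Proof.
move=> Pb b_fix a Pa; have Ga := sPG Pa; have Gb := sPG Pb.
have : a * b = b * a := centsP abP a Pa b Pb.
by rewrite !mul_badd // b_fix // (baddC Ga Gb) => /(badd_cancel Gb (blam_in b a) Ga).
Qed.

Lemma blam_fixed_id b : b \in P -> (forall a, a \in P -> blam a b = b) ->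
  {in G, forall c, blam b c = c}.
Proof.
move=> Pb b_fix c Gc; have [a pa [q p'q ->]] := bpart_decomp p Gc.
have Pa : a \in P by rewrite -bpart_Sylow.
have Gb := sPG Pb; have Ga := sPG Pa; have Gq := bpart_sub p'q.
by rewrite blam_badd // blam_fixed_on_Sylow // blam_Sylow_p' // -bpart_Sylow.
Qed.

Lemma abelian_normal_Sylow_sp_collapse : p %| #|G| -> exists x y, x <> y /\ sp x = sp y.
Proof.
move=> p_dvd_G; have [b Pb [b_neq1 b_fix]] := exists_blam_fixed_Sylow p_dvd_G.
apply: (sp_collapse_of_blam_id (sPG Pb) b_neq1).
exact: blam_fixed_id.
Qed.

End NormalSylow.
End CycleSetBrace.

Section YBSolution.
Variables (X : finType) (r : X * X -> X * X).
Hypotheses (r_invol : forall t, r (r t) = t) (sigma_bij : forall x, bijective (sigma r x)).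
(* Qualified names: all_solvable also exports an [r12]. *)
Hypothesis r_braid :
  forall t, Defs.r12 r (Defs.r23 r (Defs.r12 r t)) = Defs.r23 r (Defs.r12 r (Defs.r23 r t)).

Lemma sigma_braid x y z :
  sigma r (sigma r x y) (sigma r (gamma r y x) z) = sigma r x (sigma r y z).
Proof.
have := r_braid (x, y, z); rewrite /Defs.r12 /Defs.r23 /sigma /gamma.
case: (r (x, y)) => a b; case: (r (b, z)) => c d; case: (r (a, c)) => e f.
case: (r (y, z)) => g h; case: (r (x, g)) => i j; case: (r (j, h)) => k l.
by case.
Qed.

Lemma sigma_gamma x y : sigma r (sigma r x y) (gamma r y x) = x.
Proof. by rewrite /sigma /gamma -surjective_pairing r_invol. Qed.

Definition sigma_perm x : {perm X} := perm (bij_inj (sigma_bij x)).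

Lemma sigma_permE x y : sigma_perm x y = sigma r x y.
Proof. by rewrite permE. Qed.

Lemma sigma_perm_cycle u v :
  sigma_perm ((sigma_perm u)^-1 v) * sigma_perm u =
  sigma_perm ((sigma_perm v)^-1 u) * sigma_perm v.
Proof.
apply/permP => z; rewrite !permM; set y := (sigma_perm u)^-1 v.
have vE : v = sigma r u y by rewrite -sigma_permE permKV.
have gammaE : gamma r y u = (sigma_perm v)^-1 u.
  by apply: (@perm_inj _ (sigma_perm v)); rewrite permKV sigma_permE vE sigma_gamma.
by rewrite -gammaE !sigma_permE vE sigma_braid.
Qed.

Lemma sigma_permsE : sigma_perms r = [set sigma_perm x | x : X].
Proof.
apply/setP => s; rewrite inE; apply/existsP/imsetP => [[x /forallP sx] | [x _ ->]].
  by exists x => //; apply/permP => y; rewrite sigma_permE; apply/eqP.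
by exists x; apply/forallP => y; rewrite sigma_permE.
Qed.

End YBSolution.

Theorem lemma3p5 (X : finType) (r : X * X -> X * X) (p : nat) :
  is_YB_solution r ->
  prime p -> p %| #|perm_group_YB r| ->
  (exists P : {group {perm X}},
      [/\ P \in 'Syl_p(perm_group_YB r), P <| perm_group_YB r & abelian P]%g) ->
  retractable r.
Proof.
case=> _ r_invol sigma_bij _ r_braid p_pr p_dvd [P [sylP nPG abP]].
rewrite /perm_group_YB /= (sigma_permsE sigma_bij) in p_dvd sylP nPG.
rewrite inE in sylP.
have [x [y [x_neq_y sxy]]] := abelian_normal_Sylow_sp_collapse
  (sigma_perm_cycle r_invol sigma_bij r_braid) p_pr sylP nPG abP p_dvd.
exists x, y; split=> //; apply: functional_extensionality => z.
by rewrite -!(sigma_permE sigma_bij) sxy.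
Qed.
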